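(* Let $\{x^k\}$ be generated by the ABP algorithm described in the context and assume (A1)–(A6), (A7'), (A8): (A1) $\mathcal F$ is continuously differentiable; (A2) $C$, $Q$ nonempty closed convex, $z_i^*>-\infty$ for each $i$; (A3) each $f_i$ convex; (A4) $\Omega\ne\emptyset$; (A5) $\lambda_k>0$, $\sum\lambda_k=\infty$, $\sum\lambda_k^2<\infty$; (A6) $0<\underline\alpha\le\alpha_k\le\bar\alpha$, $0<\underline\beta\le\beta_k\le\bar\beta$, $0<\underline\gamma\le\gamma_k\le\bar\gamma$ for all $k$; (A7') $\sigma:=\varphi^*-\varphi_{\mathrm{lb}}\le\varepsilon_0$ for a known constant $\varepsilon_0\ge0$; (A8) $\sup_k\|x^k\|\le B<\infty$. Let $\bar M<\infty$ be a uniform bound $\|d^k\|\le\bar M$ for all $k$ (which exists under these assumptions), $\bar\eta:=\max(\mu,\bar M)$, $C_*:=\bar\alpha\bar\eta/\mu$ and $\Lambda_N:=\sum_{k=0}^N\lambda_k$. Then $$\limsup_{N\to\infty}\frac1{\Lambda_N}\sum_{k=0}^N\lambda_k\Phi_k\le C_*\varepsilon_0,\qquad\text{and in particular}\qquad\liminf_{k\to\infty}\Phi_k\le C_*\varepsilon_0.$$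
   Context: Let $n,m\ge1$, $\mathcal F=(f_1,\dots,f_m)\colon\mathbb R^n\to\mathbb R^m$, $C\subset\mathbb R^n$, $Q\subset\mathbb R^m$, $Q^+:=Q-\mathbb R^m_+=\{y-u:y\in Q,u\in\mathbb R^m_+\}$; $P_S$ is Euclidean projection onto a nonempty closed convex set $S$. Let $z_i^*:=\inf_{x\in C}f_i(x)$, fix $r$ with $r_i>0$, $\sum r_i=1$. Define $\varphi(x):=\max_ir_i(f_i(x)-z_i^* )$, $H(x):=\tfrac12\mathrm{dist}^2(x,C)$, $G(x):=\tfrac12\mathrm{dist}^2(\mathcal F(x),Q^+)$, $\mathcal S:=\{x:H(x)=0,G(x)=0\}$, $\varphi^*:=\inf_{\mathcal S}\varphi$, $\Omega:=\{x\in\mathcal S:\varphi(x)=\varphi^*\}$, $\varphi_{\mathrm{lb}}:=\inf_C\varphi$. ABP algorithm: given $x^0$, $\mu>0$, positive sequences $\{\alpha_k\},\{\beta_k\},\{\gamma_k\},\{\lambda_k\}$: $p^k:=P_{Q^+}(\mathcal F(x^k))$, $\rho^k:=\mathcal F(x^k)-p^k$, $z^k:=x^k-P_C(x^k)$, $v^k:=J_{\mathcal F}(x^k)^T\rho^k$, $w^k:=r_{i^*}\nabla f_{i^*}(x^k)$ with arbitrary $i^*\in\arg\max_ir_i(f_i(x^k)-z_i^* )$, $\Delta_k:=\varphi(x^k)-\varphi_{\mathrm{lb}}$, $d^k:=\alpha_k\mathbf 1_{\{\Delta_k\ge0\}}w^k+\beta_kz^k+\gamma_kv^k$, $\eta_k:=\max(\mu,\|d^k\|)$,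 $x^{k+1}:=x^k-(\lambda_k/\eta_k)d^k$. Notation: $H_k:=H(x^k)$, $G_k:=G(x^k)$, $\Delta_k^+:=\max(\Delta_k,0)$, $\Phi_k:=\alpha_k\Delta_k^++\beta_kH_k+\gamma_kG_k$. *)

From HB Require Import structures.
From mathcomp Require Import all_boot all_order all_algebra.
From mathcomp Require Import all_classical all_reals all_analysis.
Set Implicit Arguments. Unset Strict Implicit. Unset Printing Implicit Defensive.
Import Order.TTheory GRing.Theory Num.Theory.
Import numFieldNormedType.Exports.
Local Open Scope classical_set_scope.
Local Open Scope ring_scope.

Section ABPDefs.
Variable R : realType.

Definition dotv p (u v : 'rV[R]_p) : R := \sum_(j < p) u 0 j * v 0 j.
Definition enorm p (u : 'rV[R]_p) : R := Num.sqrt (dotv u u).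

Definition edist p (S : set 'rV[R]_p) (x : 'rV[R]_p) : R :=
  inf [set enorm (x - y) | y in S].

Definition is_proj p (S : set 'rV[R]_p) (P : 'rV[R]_p -> 'rV[R]_p) : Prop :=
  forall x, S (P x) /\ forall y, S y -> enorm (x - P x) <= enorm (x - y).

Definition closed_convex p (S : set 'rV[R]_p) : Prop :=
  closed S /\ forall x y (t : R), S x -> S y -> 0 <= t <= 1 ->
    S (t *: x + (1 - t) *: y).

Definition convex_fun p (g : 'rV[R]_p -> R) : Prop :=
  forall x y (t : R), 0 <= t <= 1 ->
    g (t *: x + (1 - t) *: y) <= t * g x + (1 - t) * g y.

Definition nonneg_orthant m : set 'rV[R]_m := [set u | forall i, 0 <= u 0 i].

Definition Qplus m (Q : set 'rV[R]_m) : set 'rV[R]_m :=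
  [set z | exists y u, Q y /\ @nonneg_orthant m u /\ z = y - u].

Variables (n m : nat).
Implicit Types (f : 'I_m -> 'rV[R]_n -> R) (C : set 'rV[R]_n) (Q : set 'rV[R]_m).

Definition Fvec f (x : 'rV[R]_n) : 'rV[R]_m := \row_i f i x.

Definition Hfun C (x : 'rV[R]_n) : R := 2^-1 * edist C x ^+ 2.
Definition Gfun f Q (x : 'rV[R]_n) : R := 2^-1 * edist (Qplus Q) (Fvec f x) ^+ 2.

Definition zstar f C (i : 'I_m) : R := inf [set f i x | x in C].

Definition phi f C (r : 'I_m -> R) (x : 'rV[R]_n) : R :=
  sup [set r i * (f i x - zstar f C i) | i in [set: 'I_m]].

Definition feasible f C Q : set 'rV[R]_n := [set x | Hfun C x = 0 /\ Gfun f Q x = 0].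
Definition phistar f C Q r : R := inf [set phi f C r x | x in feasible f C Q].
Definition Omega f C Q r : set 'rV[R]_n :=
  [set x | feasible f C Q x /\ phi f C r x = phistar f C Q r].
Definition phi_lb f C r : R := inf [set phi f C r x | x in C].

Definition grad (g : 'rV[R]_n -> R) (x : 'rV[R]_n) : 'rV[R]_n :=
  \row_j derive g x (delta_mx 0 j : 'rV[R]_n).

Definition jacT f (x : 'rV[R]_n) (rho : 'rV[R]_m) : 'rV[R]_n :=
  \sum_(i < m) rho 0 i *: grad (f i) x.

Definition abp_dir f C (r : 'I_m -> R) (PC : 'rV[R]_n -> 'rV[R]_n)
  (PQ : 'rV[R]_m -> 'rV[R]_m) (istar : 'I_m) (a b c : R) (xk : 'rV[R]_n) : 'rV[R]_n :=
  let rho := Fvec f xk - PQ (Fvec f xk) in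
  let z := xk - PC xk in
  let v := jacT f xk rho in
  let w := r istar *: grad (f istar) xk in
  let Delta := phi f C r xk - phi_lb f C r in
  ((if 0 <= Delta then a else 0) *: w) + b *: z + c *: v.

Definition abp_Phi f C Q (r : 'I_m -> R) (a b c : R) (xk : 'rV[R]_n) : R :=
  a * Num.max (phi f C r xk - phi_lb f C r) 0 + b * Hfun C xk + c * Gfun f Q xk.

End ABPDefs.

From Pilot Require Import Defs.
From HB Require Import structures.
From mathcomp Require Import all_boot all_order all_algebra.
From mathcomp Require Import all_classical all_reals all_analysis.
From mathcomp Require Import ring lra.
Import Order.TTheory GRing.Theory Num.Theory.
Import numFieldNormedType.Exports.
Local Open Scope classical_set_scope.
Local Open Scope ring_scope.

(* Fix z in Omega. The variational inequalities of the projections onto C and Q^+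
   (whose residual F(x) - P(F(x)) is therefore nonnegative) and the gradient
   inequality of the convex f_i give
     <d^k, x^k - z> >= Phi_k - alpha_k (phi(z) - phi_lb) >= Phi_k - A,  A := alpha_bar eps0.
   The step length s_k = lambda_k / eta_k satisfies s_k |d^k| <= lambda_k and
   lambda_k / eta_bar <= s_k <= lambda_k / mu, hence
     lambda_k Phi_k <= eta_bar/2 (|x^k - z|^2 - |x^(k+1) - z|^2)
                       + eta_bar/2 lambda_k^2 + C_* eps0 lambda_k.
   Summing, sum_(k<=N) lambda_k Phi_k <= K + C_* eps0 Lambda_N for a constant K,
   while Lambda_N -> +oo. *)

Section inner_product.
Context {R : realType} {p : nat}.
Implicit Types (u v w : 'rV[R]_p) (a : R).

Lemma dotvC u v : dotv u v = dotv v u.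
Proof. by apply: eq_bigr => j _; rewrite mulrC. Qed.

Lemma dotvDl u v w : dotv (u + v) w = dotv u w + dotv v w.
Proof. by rewrite /dotv -big_split; apply: eq_bigr => j _; rewrite !mxE mulrDl. Qed.

Lemma dotvZl a u v : dotv (a *: u) v = a * dotv u v.
Proof. by rewrite /dotv mulr_sumr; apply: eq_bigr => j _; rewrite !mxE mulrA. Qed.

Lemma dotvNl u v : dotv (- u) v = - dotv u v.
Proof. by rewrite -scaleN1r dotvZl mulN1r. Qed.

Lemma dotvBl u v w : dotv (u - v) w = dotv u w - dotv v w.
Proof. by rewrite dotvDl dotvNl. Qed.

Lemma dotvZr a u v : dotv u (a *: v) = a * dotv u v.
Proof. by rewrite dotvC dotvZl dotvC. Qed.

Lemma dotvNr u v : dotv u (- v) = - dotv u v.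
Proof. by rewrite dotvC dotvNl dotvC. Qed.

Lemma dotvBr u v w : dotv w (u - v) = dotv w u - dotv w v.
Proof. by rewrite ![dotv w _]dotvC dotvBl. Qed.

Lemma dotv_suml (I : finType) (F : I -> 'rV[R]_p) w :
  dotv (\sum_i F i) w = \sum_i dotv (F i) w.
Proof.
apply: (big_ind2 (fun u b => dotv u w = b)) => [|u1 b1 u2 b2 <- <-|//].
  by rewrite /dotv big1 // => j _; rewrite mxE mul0r.
by rewrite dotvDl.
Qed.

Lemma dotv_delta u (i : 'I_p) : dotv u (delta_mx 0 i) = u 0 i.
Proof.
rewrite /dotv (bigD1 i) //= big1 => [|j ji]; first by rewrite mxE !eqxx mulr1 addr0.
by rewrite mxE eqxx (negbTE ji) mulr0.
Qed.

Lemma dotvBZ u v a :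
  dotv (u - a *: v) (u - a *: v) = dotv u u - 2 * a * dotv u v + a ^+ 2 * dotv v v.
Proof. by rewrite dotvBl !dotvBr !dotvZl !dotvZr (dotvC v u); ring. Qed.

Lemma dotvv_ge0 u : 0 <= dotv u u.
Proof. by apply: sumr_ge0 => j _; rewrite -expr2 sqr_ge0. Qed.

Lemma dotvv_eq0 u : (dotv u u == 0) = (u == 0).
Proof.
apply/idP/eqP => [/eqP uu0|->]; last by rewrite /dotv big1 // => j _; rewrite mxE mul0r.
apply/rowP => j; rewrite mxE; apply/eqP; rewrite -[_ == 0]orbb -mulf_eq0; apply/eqP.
by apply: (psumr_eq0P _ uu0) => // i _; rewrite -expr2 sqr_ge0.
Qed.

Lemma enorm_ge0 u : 0 <= enorm u.
Proof. exact: sqrtr_ge0. Qed.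

Lemma enorm_sqr u : enorm u ^+ 2 = dotv u u.
Proof. by rewrite sqr_sqrtr // dotvv_ge0. Qed.

Lemma enorm_eq0 u : (enorm u == 0) = (u == 0).
Proof. by rewrite sqrtr_eq0 -dotvv_eq0 eq_le dotvv_ge0 andbT. Qed.

Lemma enorm_le_dotvv u v : enorm u <= enorm v -> dotv u u <= dotv v v.
Proof. by rewrite /enorm ler_sqrt // dotvv_ge0. Qed.

End inner_product.

Definition convex_set {R : realType} {p : nat} (S : set 'rV[R]_p) : Prop :=
  forall x y (t : R), S x -> S y -> 0 <= t <= 1 -> S (t *: x + (1 - t) *: y).

Section projection.
Context {R : realType} {p : nat} {S : set 'rV[R]_p} {P : 'rV[R]_p -> 'rV[R]_p}.
Hypothesis PS : is_proj S P.

Lemma edist_is_proj x : Defs.edist S x = enorm (x - P x).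
Proof.
have [SPx Pmin] := PS x; apply/eqP; rewrite eq_le; apply/andP; split.
  apply: ge_inf; last by exists (P x).
  by exists 0 => _ [y _ <-]; apply: enorm_ge0.
apply: lb_le_inf; first by exists (enorm (x - P x)), (P x).
by move=> _ [y Sy <-]; apply: Pmin.
Qed.

Lemma is_proj_edist_eq0 x : Defs.edist S x = 0 -> S x.
Proof.
rewrite edist_is_proj => /eqP; rewrite enorm_eq0 subr_eq0 => /eqP ->.
by have [] := PS x.
Qed.

Hypothesis convS : convex_set S.

(* Minimality of P x against the points P x + t b of S gives 2t <a, b> <= t^2 |b|^2
   for t in (0, 1]; the choice t = <a, b> / (|b|^2 + <a, b>) rules out <a, b> > 0. *)
Lemma is_proj_variational x y : S y -> dotv (x - P x) (y - P x) <= 0.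
Proof.
move=> Sy; have [SPx Pmin] := PS x.
set a := x - P x; set b := y - P x.
have step t : 0 < t <= 1 -> 2 * t * dotv a b <= t ^+ 2 * dotv b b.
  move=> /andP[t0 t1].
  have /Pmin/enorm_le_dotvv := convS y (P x) t Sy SPx (introT andP (conj (ltW t0) t1)).
  have -> : x - (t *: y + (1 - t) *: P x) = a - t *: b.
    by apply/rowP => j; rewrite !mxE; ring.
  rewrite dotvBZ; lra.
rewrite leNgt; apply/negP => ab_gt0; have bb_ge0 := dotvv_ge0 b.
pose t := dotv a b / (dotv b b + dotv a b).
have t_gt0 : 0 < t by apply: divr_gt0 => //; lra.
have t_le1 : t <= 1 by rewrite ler_pdivrMr; lra.
have tE : t * (dotv b b + dotv a b) = dotv a b by rewrite mulfVK //; lra.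
have := step t (introT andP (conj t_gt0 t_le1)).
have : 0 < t * dotv a b by apply: mulr_gt0.
nra.
Qed.

Lemma is_proj_residual_le x y : S y ->
  dotv (x - P x) (x - P x) <= dotv (x - P x) (x - y).
Proof.
move=> /(is_proj_variational x); rewrite [x - y](_ : _ = (x - P x) - (y - P x)).
  by rewrite (dotvBr (x - P x) (y - P x)); lra.
by rewrite opprB addrA subrK.
Qed.

End projection.

Section orthant_shift.
Context {R : realType} {m : nat} {Q : set 'rV[R]_m}.

Lemma Qplus_convex : convex_set Q -> convex_set (Qplus Q).
Proof.
move=> convQ _ _ t [qa [ua [Qqa [ua0 ->]]]] [qb [ub [Qqb [ub0 ->]]]] /andP[t0 t1].
exists (t *: qa + (1 - t) *: qb), (t *: ua + (1 - t) *: ub); split.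
  by apply: convQ => //; rewrite t0 t1.
split; last by apply/rowP => j; rewrite !mxE; ring.
by move=> j; rewrite !mxE; have := ua0 j; have := ub0 j; nra.
Qed.

Lemma QplusB z u : Qplus Q z -> nonneg_orthant u -> Qplus Q (z - u).
Proof.
move=> [q [v [Qq [v0 ->]]]] u0; exists q, (v + u); split=> //; split.
  by move=> j; rewrite mxE; apply: addr_ge0.
by rewrite opprD addrA.
Qed.

(* Test the variational inequality with the point P y - e_i of Q^+. *)
Lemma is_proj_Qplus_residual_ge0 P y i : convex_set Q -> is_proj (Qplus Q) P ->
  0 <= (y - P y) 0 i.
Proof.
move=> convQ PQ; have [QPy _] := PQ y.
have e_ge0 : nonneg_orthant (delta_mx 0 i : 'rV[R]_m) by move=> j; rewrite mxE ler0n.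
have := is_proj_variational PQ (Qplus_convex convQ) y _ (QplusB _ _ QPy e_ge0).
by rewrite addrAC subrr add0r dotvNr dotv_delta oppr_le0.
Qed.

End orthant_shift.

Section gradient.
Context {R : realType} {n : nat} {g : 'rV[R]_n -> R}.

Lemma dotv_grad x h : differentiable g x -> dotv (grad g x) h = 'd g x h.
Proof.
move=> dg; rewrite {2}(row_sum_delta h) linear_sum; apply: eq_bigr => j _.
by rewrite mxE deriveE // linearZ /= mulrC.
Qed.

(* For t in (0, 1), convexity bounds the difference quotient
   (g (x + t (y - x)) - g x) / t by g y - g x; let t -> 0+. *)
Lemma convex_fun_grad_le x y : differentiable g x -> convex_fun g ->
  dotv (grad g x) (y - x) <= g y - g x.
Proof.
move=> dg cg; rewrite dotv_grad // -deriveE //.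
have := @diff_derivable _ _ _ _ _ (y - x) dg; rewrite /derivable /derive => cvq.
set q := (fun h : R => _) in cvq *.
have cvq_right : q @ at_right 0 --> lim (q @ 0^').
  move=> A /cvq /nbhs_ballP [_ /posnumP[e] qeA].
  by exists e%:num => //= t te /gt_eqF/negbT/qeA; exact.
rewrite -(cvg_lim _ cvq_right) //.
apply: limr_le; first by apply/cvg_ex; exists (lim (q @ 0^')).
near=> t.
have t_gt0 : 0 < t by near: t; exact: nbhs_right_gt.
have t_lt1 : t < 1 by near: t; exact: nbhs_right_lt.
have := cg y x t (introT andP (conj (ltW t_gt0) (ltW t_lt1))).
have -> : t *: y + (1 - t) *: x = t *: (y - x) + x by apply/rowP => j; rewrite !mxE; ring.
rewrite /q /= -[t^-1 *: _]/(t^-1 * _) [t^-1 * _]mulrC ler_pdivrMr //; nra.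
Unshelve. all: by end_near. Qed.

Lemma convex_fun_leB_grad x y : differentiable g x -> convex_fun g ->
  g x - g y <= dotv (grad g x) (x - y).
Proof.
move=> dg cg; have := convex_fun_grad_le x y dg cg.
by rewrite -[x - y]opprB dotvNr; lra.
Qed.

End gradient.

Section max_scalarization.
Context {R : realType} {n m : nat} (f : 'I_m -> 'rV[R]_n -> R) (C : set 'rV[R]_n)
  (r : 'I_m -> R).

Lemma le_phi x i : r i * (f i x - zstar f C i) <= Defs.phi f C r x.
Proof.
apply: ub_le_sup; last by exists i.
exists (\sum_j `|r j * (f j x - zstar f C j)|) => _ [j _ <-].
apply: le_trans (ler_norm _) _.
by rewrite (bigD1 j) //=; apply: ler_wpDr => //; exact: sumr_ge0.
Qed.

Lemma phi_argmaxE x i0 :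
  (forall i, r i * (f i x - zstar f C i) <= r i0 * (f i0 x - zstar f C i0)) ->
  Defs.phi f C r x = r i0 * (f i0 x - zstar f C i0).
Proof.
move=> i0_max; apply/le_anti; rewrite le_phi andbT.
by apply: ge_sup; [exists (r i0 * (f i0 x - zstar f C i0)), i0 | move=> _ [i _ <-]].
Qed.

End max_scalarization.

Section normalized_step.
Context {R : realType} {p : nat}.

Lemma normalized_step_le (x xs d : 'rV[R]_p) (lam mu etab Phi T A : R)
    (x' := x - (lam / Num.max mu (enorm d)) *: d) :
  0 < mu -> mu <= etab -> enorm d <= etab -> 0 <= lam -> 0 <= Phi -> 0 <= A ->
  Phi - T <= dotv d (x - xs) -> T <= A ->
  lam * Phi <= etab / 2 * (dotv (x - xs) (x - xs) - dotv (x' - xs) (x' - xs))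
               + etab / 2 * lam ^+ 2 + etab * A / mu * lam.
Proof.
move=> mu_gt0 mu_le d_le lam_ge0 Phi_ge0 A_ge0 descent T_le.
set eta := Num.max mu (enorm d); set s := lam / eta.
have mu_le_eta : mu <= eta by rewrite le_max lexx.
have d_le_eta : enorm d <= eta by rewrite le_max lexx orbT.
have eta_le : eta <= etab by rewrite ge_max mu_le.
have sE : s * eta = lam by rewrite mulfVK // gt_eqF // (lt_le_trans mu_gt0).
have s_ge0 : 0 <= s by rewrite divr_ge0 // (le_trans (ltW mu_gt0)).
have s_le : s <= lam / mu by rewrite ler_wpM2l // lef_pV2 ?posrE // (lt_le_trans mu_gt0).
have -> : x' - xs = (x - xs) - s *: d by rewrite addrAC.
rewrite dotvBZ (dotvC (x - xs) d); clearbody s.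
have sd_le : s ^+ 2 * dotv d d <= lam ^+ 2.
  have := ler_wpM2l s_ge0 d_le_eta; have := mulr_ge0 s_ge0 (enorm_ge0 d).
  by rewrite -enorm_sqr -sE; nra.
have etab_ge0 : 0 <= etab by rewrite (le_trans (ltW mu_gt0)).
have := ler_wpM2l (mulr_ge0 etab_ge0 s_ge0) descent.
have := ler_wpM2l (mulr_ge0 etab_ge0 s_ge0) T_le.
have := ler_wpM2l (mulr_ge0 etab_ge0 A_ge0) s_le.
have := ler_wpM2l (divr_ge0 etab_ge0 (ler0n _ 2)) sd_le.
have := ler_wpM2r Phi_ge0 (ler_wpM2l s_ge0 eta_le); rewrite [s * eta]sE.
lra.
Qed.

End normalized_step.

Section abp_direction.
Context {R : realType} {n m : nat} {f : 'I_m -> 'rV[R]_n -> R} {C : set 'rV[R]_n} {Q : set 'rV[R]_m}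
  {r : 'I_m -> R} {PC : 'rV[R]_n -> 'rV[R]_n} {PQ : 'rV[R]_m -> 'rV[R]_m}.
Hypotheses (r_ge0 : forall i, 0 <= r i)
  (f_diff : forall i x, differentiable (f i) x) (f_convex : forall i, convex_fun (f i))
  (convC : convex_set C) (convQ : convex_set Q)
  (PC_proj : is_proj C PC) (PQ_proj : is_proj (Qplus Q) PQ).

Lemma Hfun_is_proj x : Hfun C x = 2^-1 * dotv (x - PC x) (x - PC x).
Proof. by rewrite /Hfun (edist_is_proj PC_proj) enorm_sqr. Qed.

Lemma Gfun_is_proj x :
  Gfun f Q x = 2^-1 * dotv (Fvec f x - PQ (Fvec f x)) (Fvec f x - PQ (Fvec f x)).
Proof. by rewrite /Gfun (edist_is_proj PQ_proj) enorm_sqr. Qed.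

Lemma feasible_mem x : feasible f C Q x -> C x /\ Qplus Q (Fvec f x).
Proof.
have half_sqr_eq0 (a : R) : 2^-1 * a ^+ 2 = 0 -> a = 0.
  by move/eqP; rewrite mulf_eq0 invr_eq0 pnatr_eq0 sqrf_eq0 => /eqP.
move=> [/half_sqr_eq0 Hx0 /half_sqr_eq0 Gx0].
by split; [exact: (is_proj_edist_eq0 PC_proj) | exact: (is_proj_edist_eq0 PQ_proj)].
Qed.

Lemma abp_Phi_ge0 x (a b c : R) : 0 <= a -> 0 <= b -> 0 <= c ->
  0 <= abp_Phi f C Q r a b c x.
Proof.
move=> a0 b0 c0; rewrite /abp_Phi Hfun_is_proj Gfun_is_proj.
by rewrite !addr_ge0 // !mulr_ge0 ?le_max ?lexx ?orbT ?dotvv_ge0.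
Qed.

Context {xs : 'rV[R]_n}.
Hypotheses (Cxs : C xs) (Qxs : Qplus Q (Fvec f xs)).

(* |rho|^2 <= <rho, F x - F xs> by the projection onto Q^+; as rho >= 0
   componentwise, the gradient inequalities of the f_i sum up with weights rho_i. *)
Lemma dotv_jacT_residual_ge x (rho := Fvec f x - PQ (Fvec f x)) :
  dotv rho rho <= dotv (jacT f x rho) (x - xs).
Proof.
apply: le_trans (is_proj_residual_le PQ_proj (Qplus_convex convQ) _ _ Qxs) _.
rewrite dotv_suml; apply: ler_sum => i _; rewrite dotvZl.
apply: ler_wpM2l; first exact: (is_proj_Qplus_residual_ge0 _ _ _ convQ PQ_proj).
by rewrite !mxE; apply: convex_fun_leB_grad.
Qed.

Lemma phiB_le_dotv x i0 :
  (forall i, r i * (f i x - zstar f C i) <= r i0 * (f i0 x - zstar f C i0)) ->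
  Defs.phi f C r x - Defs.phi f C r xs <= dotv (r i0 *: grad (f i0) x) (x - xs).
Proof.
move=> /phi_argmaxE ->; have := le_phi f C r xs i0.
have := ler_wpM2l (r_ge0 i0) (convex_fun_leB_grad x xs (f_diff i0 x) (f_convex i0)).
by rewrite dotvZl; lra.
Qed.

Lemma abp_dir_dotv_ge x i0 (a b c : R) :
  (forall i, r i * (f i x - zstar f C i) <= r i0 * (f i0 x - zstar f C i0)) ->
  0 <= a -> 0 <= b -> 0 <= c ->
  abp_Phi f C Q r a b c x
    - (if 0 <= Defs.phi f C r x - phi_lb f C r then a else 0)
      * (Defs.phi f C r xs - phi_lb f C r)
  <= dotv (abp_dir f C r PC PQ i0 a b c x) (x - xs).
Proof.
move=> i0_max a0 b0 c0.
rewrite /abp_dir /= 2!dotvDl !dotvZl /abp_Phi Hfun_is_proj Gfun_is_proj.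
have zz_le := is_proj_residual_le PC_proj convC x _ Cxs.
have /= rr_le := dotv_jacT_residual_ge x.
have := ler_wpM2l b0 zz_le; have := ler_wpM2l c0 rr_le.
have := mulr_ge0 b0 (dotvv_ge0 (x - PC x)).
have := mulr_ge0 c0 (dotvv_ge0 (Fvec f x - PQ (Fvec f x))).
have := phiB_le_dotv x i0 i0_max; rewrite dotvZl.
case: ifPn => [Delta_ge0|Delta_lt0] phi_le.
  by rewrite max_l //; have := ler_wpM2l a0 phi_le; lra.
by rewrite max_r; [lra | rewrite ltW // ltNge].
Qed.

Lemma abp_step_le x i0 (a b c lam mu etab A : R)
    (d := abp_dir f C r PC PQ i0 a b c x) (x' := x - (lam / Num.max mu (enorm d)) *: d) :
  (forall i, r i * (f i x - zstar f C i) <= r i0 * (f i0 x - zstar f C i0)) ->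
  0 <= a -> 0 <= b -> 0 <= c -> 0 < mu -> mu <= etab -> enorm d <= etab ->
  0 <= lam -> 0 <= A -> a * (Defs.phi f C r xs - phi_lb f C r) <= A ->
  lam * abp_Phi f C Q r a b c x <=
    etab / 2 * (dotv (x - xs) (x - xs) - dotv (x' - xs) (x' - xs))
    + etab / 2 * lam ^+ 2 + etab * A / mu * lam.
Proof.
move=> i0_max a0 b0 c0 mu_gt0 mu_le d_le lam_ge0 A_ge0 aphi_le.
apply: (normalized_step_le _ _ _ _ _ _ _ _ _ mu_gt0 mu_le d_le lam_ge0
  (abp_Phi_ge0 x a b c a0 b0 c0) A_ge0 (abp_dir_dotv_ge x i0 a b c i0_max a0 b0 c0)).
by case: ifP => _; rewrite ?mul0r.
Qed.

End abp_direction.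

Lemma descent_sum_le {R : realType} {lam Phi D : nat -> R} {e c : R} :
  0 <= e -> (forall k, 0 <= D k) -> cvgn (series (fun k => lam k ^+ 2)) ->
  (forall k, lam k * Phi k <= e * (D k - D k.+1) + e * lam k ^+ 2 + c * lam k) ->
  forall N, \sum_(0 <= k < N) lam k * Phi k <=
    e * D 0%N + e * limn (series (fun k => lam k ^+ 2)) + c * \sum_(0 <= k < N) lam k.
Proof.
move=> e_ge0 D_ge0 lam2_cvg step N.
apply: le_trans (ler_sum _ (fun k _ => step k)) _.
rewrite !big_split /= -!mulr_sumr.
have tele : \sum_(0 <= k < N) (D k - D k.+1) = D 0%N - D N.
  rewrite -opprB -telescope_sumr // -sumrN.
  by apply: eq_bigr => k _; rewrite opprB.
have lam2_le : \sum_(0 <= k < N) lam k ^+ 2 <= limn (series (fun k => lam k ^+ 2)).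
  apply: (nondecreasing_cvgn_le _ lam2_cvg N).
  by apply: nondecreasing_series => k _ _; exact: sqr_ge0.
rewrite tele; have := ler_wpM2l e_ge0 lam2_le; have := mulr_ge0 e_ge0 (D_ge0 N).
lra.
Qed.

Section limn_esup_einf_bounds.
Context {R : realType}.
Implicit Types (u : (\bar R)^nat) (l : \bar R).
Local Open Scope ereal_scope.

Lemma limn_esup_le_near u l : (\forall N \near \oo, u N <= l) -> limn_esup u <= l.
Proof.
move=> [N0 _ uN_le]; rewrite /limn_esup limf_esupE.
apply: le_trans (ereal_inf_lbound _) _; first by exists [set N | (N0 <= N)%N]; [exists N0|].
by apply: ge_ereal_sup => _ [N /uN_le uN <-].
Qed.

Lemma limn_einf_le_frequently u l :
  (forall n, exists2 k, (n <= k)%N & u k <= l) -> limn_einf u <= l.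
Proof.
move=> u_freq; rewrite -[limn_einf u]/(limf_einf u \oo) limf_einfE.
apply: ge_ereal_sup => _ [V [N0 _ V_tail] <-].
have [k N0k uk_le] := u_freq N0.
by apply: le_trans (ereal_inf_lbound _) uk_le; exists k => //; exact: V_tail.
Qed.

End limn_esup_einf_bounds.

Section weighted_mean.
Context {R : realType} {lam u : nat -> R} {K c : R}.
Hypotheses (lam_gt0 : forall k, 0 < lam k) (lam_dvg : ~ cvgn (series lam)).
Hypothesis sum_le :
  forall N, \sum_(0 <= k < N) lam k * u k <= K + c * \sum_(0 <= k < N) lam k.

Let series_lam_ge : forall M, \forall N \near \oo, M < \sum_(0 <= k < N) lam k.
Proof.
apply/cvgryPgt/nondecreasing_dvgn_lt => //.
by apply: nondecreasing_series => k _ _; exact: ltW.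
Qed.

Lemma weighted_mean_le_near e : 0 < e ->
  \forall N \near \oo,
    (\sum_(0 <= k < N.+1) lam k * u k) / (\sum_(0 <= k < N.+1) lam k) <= c + e.
Proof.
move=> e_gt0; have [N0 _ N0_large] := series_lam_ge (`|K| / e).
exists N0 => // N /= N0N; have := N0_large _ (leqW N0N).
set L := \sum_(0 <= k < N.+1) lam k => KL.
have L_gt0 : 0 < L by apply: le_lt_trans KL; rewrite divr_ge0 // ltW.
rewrite ler_pdivrMr // mulrDl; apply: le_trans (sum_le N.+1) _.
rewrite -/L; rewrite ltr_pdivrMr // in KL; have := ler_norm K; lra.
Qed.

Lemma limn_esup_weighted_mean_le :
  (limn_esup (fun N => ((\sum_(0 <= k < N.+1) lam k * u k) /
                        (\sum_(0 <= k < N.+1) lam k))%:E) <= c%:E)%E.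
Proof.
apply/lee_addgt0Pr => e e_gt0; apply: limn_esup_le_near.
near=> N; rewrite -EFinD lee_fin; near: N; exact: weighted_mean_le_near.
Unshelve. all: by end_near. Qed.

(* If u_k > c + e for all k >= n, then the weighted sum of u_k - (c + e) stays
   bounded below while sum_le forces it below K - e Lambda_N -> -oo. *)
Lemma frequently_le e : 0 < e -> forall n, exists2 k, (n <= k)%N & u k <= c + e.
Proof.
move=> e_gt0 n; apply: contrapT => no_k.
have u_gt k : (n <= k)%N -> c + e < u k.
  by move=> nk; rewrite ltNge; apply/negP => uk; apply: no_k; exists k.
pose P := \sum_(0 <= k < n) lam k * (u k - (c + e)).
have [N0 _ N0_large] := series_lam_ge ((K - P) / e).
pose N := maxn N0 n; have := N0_large N (leq_maxl _ _).
have tail_ge : P <= \sum_(0 <= k < N) lam k * (u k - (c + e)).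
  rewrite (big_cat_nat (leq0n n) (leq_maxr N0 n)) /= lerDl.
  rewrite big_nat_cond; apply: sumr_ge0 => k /andP[/andP[nk _] _].
  by rewrite mulr_ge0 ?ltW // subr_gt0 u_gt.
move: tail_ge; have -> : \sum_(0 <= k < N) lam k * (u k - (c + e)) =
    \sum_(0 <= k < N) lam k * u k - (c + e) * \sum_(0 <= k < N) lam k.
  by rewrite mulr_sumr -sumrB; apply: eq_bigr => k _; ring.
have := sum_le N; rewrite ltr_pdivrMr //; lra.
Qed.

Lemma limn_einf_le : (limn_einf (fun k => (u k)%:E) <= c%:E)%E.
Proof.
apply/lee_addgt0Pr => e e_gt0; apply: limn_einf_le_frequently => n.
by have [k nk uk_le] := frequently_le e e_gt0 n; exists k; rewrite // -EFinD lee_fin.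
Qed.

End weighted_mean.

Theorem lemma17 (R : realType) (n m : nat)
  (f : 'I_m -> 'rV[R]_n -> R) (C : set 'rV[R]_n) (Q : set 'rV[R]_m)
  (r : 'I_m -> R)
  (PC : 'rV[R]_n -> 'rV[R]_n) (PQ : 'rV[R]_m -> 'rV[R]_m)
  (x : nat -> 'rV[R]_n) (mu : R)
  (alpha beta gamma lambda : nat -> R) (istar : nat -> 'I_m)
  (alo ahi blo bhi glo ghi eps0 B Mbar : R) :
  (0 < n)%N -> (0 < m)%N ->
  (forall i, 0 < r i) -> \sum_(i < m) r i = 1 ->
  0 < mu ->
  (* (A1) F continuously differentiable *)
  (forall i y, differentiable (f i) y) ->
  (forall i (j : 'I_n), continuous (fun y => derive (f i) y (delta_mx 0 j : 'rV[R]_n))) ->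
  (* (A2) *)
  C !=set0 -> closed_convex C -> Q !=set0 -> closed_convex Q ->
  (forall i, has_lbound [set f i y | y in C]) ->
  (* (A3) *)
  (forall i, convex_fun (f i)) ->
  (* (A4) *)
  Omega f C Q r !=set0 ->
  (* (A5) *)
  (forall k, 0 < lambda k) ->
  ~ cvgn (series lambda) ->
  cvgn (series (fun k => lambda k ^+ 2)) ->
  (* (A6) *)
  0 < alo -> 0 < blo -> 0 < glo ->
  (forall k, alo <= alpha k <= ahi) ->
  (forall k, blo <= beta k <= bhi) ->
  (forall k, glo <= gamma k <= ghi) ->
  (* (A7') *)
  0 <= eps0 -> phistar f C Q r - phi_lb f C r <= eps0 ->
  (* (A8) *)
  (forall k, enorm (x k) <= B) ->
  (* the ABP iteration *)
  is_proj C PC -> is_proj (Qplus Q) PQ ->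
  (forall k i, r i * (f i (x k) - zstar f C i) <=
     r (istar k) * (f (istar k) (x k) - zstar f C (istar k))) ->
  (forall k, x k.+1 = x k - (lambda k /
       Num.max mu (enorm (abp_dir f C r PC PQ (istar k) (alpha k) (beta k) (gamma k) (x k))))
       *: abp_dir f C r PC PQ (istar k) (alpha k) (beta k) (gamma k) (x k)) ->
  (* uniform bound on the directions *)
  (forall k, enorm (abp_dir f C r PC PQ (istar k) (alpha k) (beta k) (gamma k) (x k)) <= Mbar) ->
  let Cst := ahi * Num.max mu Mbar / mu in
  let Phi := fun k => abp_Phi f C Q r (alpha k) (beta k) (gamma k) (x k) in
  (limn_esup (fun N => ((\sum_(0 <= k < N.+1) lambda k * Phi k) /
                       (\sum_(0 <= k < N.+1) lambda k))%:E)
    <= (Cst * eps0)%:E)%E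
  /\ (limn_einf (fun k => (Phi k)%:E) <= (Cst * eps0)%:E)%E.
Proof.
move=> _ _ r_gt0 _ mu_gt0 f_diff _ _ [_ convC] _ [_ convQ] _ f_convex
  [xs [xs_feas phi_xs]] lam_gt0 lam_dvg lam2_cvg alo_gt0 blo_gt0 glo_gt0
  alpha_b beta_b gamma_b eps0_ge0 sigma_le _ PC_proj PQ_proj istar_max x_next d_le Cst Phi.
have r_ge0 i := ltW (r_gt0 i).
have [Cxs Qxs] := feasible_mem PC_proj PQ_proj xs xs_feas.
set etab := Num.max mu Mbar; set A := ahi * eps0.
have ahi_ge0 : 0 <= ahi by have /andP[? ?] := alpha_b 0%N; lra.
pose D k := dotv (x k - xs) (x k - xs).
have step k : lambda k * Phi k <=
    etab / 2 * (D k - D k.+1) + etab / 2 * lambda k ^+ 2 + etab * A / mu * lambda k.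
  have /andP[alo_le ahi_le] := alpha_b k.
  have /andP[blo_le _] := beta_b k; have /andP[glo_le _] := gamma_b k.
  rewrite /D x_next; apply: abp_step_le => //; try lra.
  - by rewrite le_max lexx.
  - by rewrite le_max d_le orbT.
  - exact: ltW.
  - exact: mulr_ge0.
  - rewrite phi_xs /A; have := ler_wpM2r eps0_ge0 ahi_le.
    by have := ler_wpM2l (ltW (lt_le_trans alo_gt0 alo_le)) sigma_le; lra.
have etab_half_ge0 : 0 <= etab / 2 by rewrite divr_ge0 // le_max ltW.
have sum_le := descent_sum_le etab_half_ge0 (fun k => dotvv_ge0 _) lam2_cvg step.
have -> : Cst * eps0 = etab * A / mu by rewrite /Cst /A /etab; ring.
split; [exact: limn_esup_weighted_mean_le lam_gt0 lam_dvg sum_le |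
        exact: limn_einf_le lam_gt0 lam_dvg sum_le].
Qed.
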